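(* Let $d\ge2$, $\Omega\subset\mathbb{R}^d$ a convex polytope, $\mathcal{T}_h$ a shape-regular simplicial triangulation of $\Omega$, $\varepsilon>0$, and let $V_h$, $\Pi_h$, $\Pi_h^c$, $b_h$ and $|||\cdot|||$ be as in the context. Then for every $v\in V_h$, $$\tfrac12|||v|||^2\le b_h(v,v).$$
   Context: For a simplex $K$ with vertices $a_1,\dots,a_{d+1}$ and barycentric coordinates $\lambda_i$, $Z_K=\mathbb{P}_2(K)\oplus\operatorname{span}\{\lambda_i^2\lambda_j-\lambda_i\lambda_j^2:i<j\}$ and $e_{ij}=a_j-a_i$. $Z_h=\{v\in H^1(\Omega): v|_K\in Z_K\ \forall K,\ v(a),\nabla v(a)\text{ single-valued at every vertex }a\}$; $V_h=\{v\in Z_h: v(a)=0,\ \nabla v(a)=0\text{ at every vertex }a\in\partial\Omega\}$. For $v\in Z_h$ and $K\in\mathcal{T}_h$, $\Pi_Kv=\sum_i v(a_i)\lambda_i+\sum_i\sum_{j\ne i}(e_{ij}\cdot\nabla v|_K)(a_i)\tfrac12\lambda_i\lambda_j$; $(\Pi_hv)|_K=\Pi_Kv$ and $\Pi_h^c=I-\Pi_h$. $\nabla_h^k$ denotes the elementwise $k$-th derivative. For $v,w\in V_h$: $b_h(v,w)=\varepsilon^2\bigl((\nabla_h^2\Pi_hv,\nabla_h^2\Pi_hw)+(\nabla_h^2\Pi_h^cv,\nabla_h^2\Pi_h^cw)\bigr)+(\nabla v,\nabla w)$ and $|||v|||=\bigl(\varepsilon^2\|\nabla_h^2v\|_{L^2}^2+\|\nabla_hv\|_{L^2}^2\bigr)^{1/2}$.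 *)

From HB Require Import structures.
From mathcomp Require Import all_boot all_order all_algebra.
From mathcomp Require Import all_classical all_reals all_analysis.
Set Implicit Arguments. Unset Strict Implicit. Unset Printing Implicit Defensive.
Import Order.TTheory GRing.Theory Num.Theory.
Import numFieldNormedType.Exports.
Local Open Scope classical_set_scope.
Local Open Scope ring_scope.

Section FEM.
Variable R : realType.

Definition dotv (d : nat) (u w : 'rV[R]_d) : R := \sum_(k < d) u 0 k * w 0 k.

Definition evec (d : nat) (k : 'I_d) : 'rV[R]_d := delta_mx 0 k.

Definition grad (d : nat) (f : 'rV[R]_d -> R) (x : 'rV[R]_d) : 'rV[R]_d :=
  \row_k derive f x (evec k).
Definition hess (d : nat) (f : 'rV[R]_d -> R) (x : 'rV[R]_d) : 'M[R]_d :=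
  \matrix_(i, j) derive (fun y => derive f y (evec i)) x (evec j).

Definition sqnv (d : nat) (u : 'rV[R]_d) : R := \sum_(k < d) u 0 k ^+ 2.
Definition sqnm (d : nat) (A : 'M[R]_d) : R := \sum_(i < d) \sum_(j < d) A i j ^+ 2.

Definition hull (d m : nat) (p : 'I_m -> 'rV[R]_d) : set 'rV[R]_d :=
  [set x | exists mu : 'I_m -> R, (forall i, 0 <= mu i) /\ \sum_i mu i = 1 /\
                                  x = \sum_i mu i *: p i].

(* A simplex in R^d is given by its d+1 vertices a : 'I_d.+1 -> 'rV_d.
   bary_mx a has rows (a_i, 1); the simplex is nondegenerate iff it is
   invertible; barycentric coordinates lambda(x) solve lambda * M = (x, 1),
   i.e. sum_i lambda_i a_i = x and sum_i lambda_i = 1. *)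
Definition bary_mx (d : nat) (a : 'I_d.+1 -> 'rV[R]_d) : 'M[R]_d.+1 :=
  \matrix_(i, j) (if (j < d)%N as b return (j < d)%N = b -> R
                  then fun h => a i 0 (Ordinal h) else fun _ => 1) erefl.
Definition ext1 (d : nat) (x : 'rV[R]_d) : 'rV[R]_d.+1 :=
  \row_j (if (j < d)%N as b return (j < d)%N = b -> R
          then fun h => x 0 (Ordinal h) else fun _ => 1) erefl.
Definition nondegenerate (d : nat) (a : 'I_d.+1 -> 'rV[R]_d) : Prop :=
  bary_mx a \in unitmx.
Definition lam (d : nat) (a : 'I_d.+1 -> 'rV[R]_d) (i : 'I_d.+1) (x : 'rV[R]_d) : R :=
  (ext1 x *m invmx (bary_mx a)) 0 i.
Definition simplex (d : nat) (a : 'I_d.+1 -> 'rV[R]_d) : set 'rV[R]_d := hull a.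

Definition P2 (d : nat) (q : 'rV[R]_d -> R) : Prop :=
  exists (c : R) (b : 'rV[R]_d) (A : 'M[R]_d),
    forall x, q x = c + dotv b x + (x *m A *m x^T) 0 0.

(* Z_K = P_2(K) + span{lam_i^2 lam_j - lam_i lam_j^2 : i < j}; an element of
   Z_K is represented by its (unique) polynomial extension to R^d. *)
Definition ZK (d : nat) (a : 'I_d.+1 -> 'rV[R]_d) (p : 'rV[R]_d -> R) : Prop :=
  exists q : 'rV[R]_d -> R, P2 q /\
  exists c : 'I_d.+1 -> 'I_d.+1 -> R, forall x,
    p x = q x + \sum_(i < d.+1) \sum_(j < d.+1 | (i < j)%N)
                  c i j * (lam a i x ^+ 2 * lam a j x - lam a i x * lam a j x ^+ 2).

(* Pi_K v, where v is given on K by its representative p, with vertex values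
   v(a_i) and vertex gradients (grad v|_K)(a_i) = grad p (a_i). *)
Definition PiK (d : nat) (a : 'I_d.+1 -> 'rV[R]_d) (p : 'rV[R]_d -> R)
  (x : 'rV[R]_d) : R :=
  \sum_(i < d.+1) p (a i) * lam a i x
  + \sum_(i < d.+1) \sum_(j < d.+1 | j != i)
      dotv (a j - a i) (grad p (a i)) * (2^-1 * lam a i x * lam a j x).
Definition PicK (d : nat) (a : 'I_d.+1 -> 'rV[R]_d) (p : 'rV[R]_d -> R)
  (x : 'rV[R]_d) : R := p x - PiK a p x.

(* Lebesgue integral over R^d of a nonnegative extended-real function, as the
   iterated one-dimensional Lebesgue integral (equal to the d-dimensional
   Lebesgue integral by Tonelli). *)
Fixpoint iterint (n : nat) : ('rV[R]_n -> \bar R) -> \bar R :=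
  match n return ('rV[R]_n -> \bar R) -> \bar R with
  | 0 => fun f => f 0
  | n'.+1 => fun f =>
      (\int[lebesgue_measure]_(t in [set: R])
          iterint (fun y : 'rV[R]_n' => f (row_mx (t%:M : 'rV[R]_1) y)))%E
  end.

Definition intover (d : nat) (S : set 'rV[R]_d) (g : 'rV[R]_d -> R) : \bar R :=
  iterint (fun x => if `[< S x >] then (g x)%:E else 0%E).

Definition triangulation (d n : nat) (Obar : set 'rV[R]_d)
  (a : 'I_n -> 'I_d.+1 -> 'rV[R]_d) : Prop :=
  (forall k, nondegenerate (a k)) /\
  Obar = \bigcup_(k in [set: 'I_n]) simplex (a k) /\
  (forall k l, k != l -> interior (simplex (a k)) `&` interior (simplex (a l)) = set0) /\
  (* conformity: the intersection of two simplices is the convex hull of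
     their common vertices (i.e. empty or a common face) *)
  (forall k l, simplex (a k) `&` simplex (a l) =
     [set x | exists mu : 'I_d.+1 -> R,
        (forall i, 0 <= mu i) /\ \sum_i mu i = 1 /\
        (forall i, mu i != 0 -> exists j, a k i = a l j) /\
        x = \sum_i mu i *: a k i]).

(* Membership in V_h: v is continuous on Obar (H^1 for piecewise polynomials),
   v|_K = p k on K_k with p k in Z_K, vertex gradients single valued,
   values and gradients vanishing at boundary vertices. *)
Definition in_Vh (d n : nat) (Obar : set 'rV[R]_d) (a : 'I_n -> 'I_d.+1 -> 'rV[R]_d)
  (v : 'rV[R]_d -> R) (p : 'I_n -> 'rV[R]_d -> R) : Prop :=
  {within Obar, continuous v} /\
  (forall k, ZK (a k) (p k)) /\
  (forall k x, simplex (a k) x -> v x = p k x) /\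
  (forall k l i j, a k i = a l j -> grad (p k) (a k i) = grad (p l) (a l j)) /\
  (forall k i, ~ interior Obar (a k i) -> v (a k i) = 0 /\ grad (p k) (a k i) = 0).

Definition sq_grad_h (d n : nat) (a : 'I_n -> 'I_d.+1 -> 'rV[R]_d)
  (p : 'I_n -> 'rV[R]_d -> R) : \bar R :=
  (\sum_(k < n) intover (simplex (a k)) (fun x => sqnv (grad (p k) x)))%E.
Definition sq_hess_h (d n : nat) (a : 'I_n -> 'I_d.+1 -> 'rV[R]_d)
  (p : 'I_n -> 'rV[R]_d -> R) : \bar R :=
  (\sum_(k < n) intover (simplex (a k)) (fun x => sqnm (hess (p k) x)))%E.

Definition bh_vv (d n : nat) (eps : R) (a : 'I_n -> 'I_d.+1 -> 'rV[R]_d)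
  (p : 'I_n -> 'rV[R]_d -> R) : \bar R :=
  ((eps ^+ 2)%:E * (sq_hess_h a (fun k => PiK (a k) (p k))
                    + sq_hess_h a (fun k => PicK (a k) (p k)))
   + sq_grad_h a p)%E.
Definition tnorm2 (d n : nat) (eps : R) (a : 'I_n -> 'I_d.+1 -> 'rV[R]_d)
  (p : 'I_n -> 'rV[R]_d -> R) : \bar R :=
  ((eps ^+ 2)%:E * sq_hess_h a p + sq_grad_h a p)%E.

End FEM.

(* Pointwise on an element, D^2 v = D^2 (Pi_K v) + D^2 (Pi_K^c v), so
   |D^2 v|^2 <= 2 |D^2 Pi_K v|^2 + 2 |D^2 Pi_K^c v|^2; integrating, summing over the
   elements and halving gives the estimate, since the gradient term of b_h is the
   full one.
   The analytic work is to justify additivity and monotonicity of the iterated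
   Lebesgue integral: all integrands are polynomials restricted to a simplex, which
   is cut out by the affine inequalities lambda_i >= 0, hence measurable. *)

From Pilot Require Import Defs.
From HB Require Import structures.
From mathcomp Require Import all_boot all_order all_algebra.
From mathcomp Require Import all_classical all_reals all_analysis.
From mathcomp Require Import measurable_realfun.
From mathcomp Require Import ring.
Import Order.TTheory GRing.Theory Num.Theory.
Import numFieldNormedType.Exports.
Local Open Scope classical_set_scope.
Local Open Scope ring_scope.
Set Implicit Arguments. Unset Strict Implicit. Unset Printing Implicit Defensive.

Section PolynomialFunctions.
Variables (R : realType) (n : nat).

Inductive polyfun : ('rV[R]_n -> R) -> Prop :=
| polyfun_cst c : polyfun (fun _ => c)
| polyfun_coord k : polyfun (fun y => y 0 k)
| polyfunD f g : polyfun f -> polyfun g -> polyfun (fun y => f y + g y)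
| polyfunM f g : polyfun f -> polyfun g -> polyfun (fun y => f y * g y).

Lemma eq_polyfun f g : polyfun f -> f =1 g -> polyfun g.
Proof. by move=> pf /funext <-. Qed.

Lemma polyfunB f g : polyfun f -> polyfun g -> polyfun (fun y => f y - g y).
Proof.
move=> pf pg; apply: polyfunD pf _.
by apply: eq_polyfun (polyfunM (polyfun_cst (-1)) pg) _ => y; rewrite mulN1r.
Qed.

Lemma polyfun_sum (I : Type) (s : seq I) (P : pred I) (F : I -> 'rV[R]_n -> R) :
  (forall i, P i -> polyfun (F i)) -> polyfun (fun y => \sum_(i <- s | P i) F i y).
Proof.
move=> pF; elim: s => [|i s IH].
  by apply: eq_polyfun (polyfun_cst 0) _ => y; rewrite big_nil.
case Pi: (P i).
  by apply: eq_polyfun (polyfunD (pF i Pi) IH) _ => y; rewrite big_cons Pi.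
by apply: eq_polyfun IH _ => y; rewrite big_cons Pi.
Qed.

Lemma is_derive_coord (k : 'I_n) (x v : 'rV[R]_n) :
  is_derive x v (fun y : 'rV[R]_n => y 0 k) (v 0 k).
Proof.
apply: DeriveDef; first exact/diff_derivable/differentiable_coord.
apply: cvg_lim => //; apply: cvg_near_cst; near=> h.
have h0 : h != 0 by near: h; exact: nbhs_dnbhs_neq.
rewrite /= !mxE addrK.
by rewrite -[h^-1 *: _]/(h^-1 * (h * v 0 k)) mulrA mulVf ?mul1r.
Unshelve. all: by end_near.
Qed.

Lemma polyfun_derivable_derive f : polyfun f ->
  forall v, (forall x, derivable f x v) /\ polyfun (fun x => 'D_v f x).
Proof.
elim=> [c|k|f1 g pf IHf pg IHg|f1 g pf IHf pg IHg] v.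
- split=> [x|]; first exact: derivable_cst.
  by apply: eq_polyfun (polyfun_cst 0) _ => x; rewrite derive_cst.
- split=> [x|]; first by case: (is_derive_coord k x v).
  apply: eq_polyfun (polyfun_cst (v 0 k)) _ => x.
  by rewrite (@derive_val _ _ _ _ _ _ _ (is_derive_coord k x v)).
- have [df pdf] := IHf v; have [dg pdg] := IHg v.
  split=> [x|]; first exact: derivableD.
  by apply: eq_polyfun (polyfunD pdf pdg) _ => x; rewrite deriveD.
- have [df pdf] := IHf v; have [dg pdg] := IHg v.
  split=> [x|]; first exact: derivableM.
  apply: eq_polyfun (polyfunD (polyfunM pf pdg) (polyfunM pg pdf)) _ => x.
  by rewrite deriveM.
Qed.

Lemma polyfun_derivable f x v : polyfun f -> derivable f x v.
Proof. by move=> pf; case: (polyfun_derivable_derive pf v). Qed.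

Lemma polyfun_derivative f v : polyfun f -> polyfun (fun x => 'D_v f x).
Proof. by move=> pf; case: (polyfun_derivable_derive pf v). Qed.

Lemma polyfun_hess f i j : polyfun f -> polyfun (fun x => hess f x i j).
Proof.
move=> pf; apply: eq_polyfun (polyfun_derivative _ (polyfun_derivative _ pf)) _ => x.
by rewrite mxE.
Qed.

Lemma polyfun_sqnm_hess f : polyfun f -> polyfun (fun x => sqnm (hess f x)).
Proof.
move=> pf; apply: polyfun_sum => i _; apply: polyfun_sum => j _.
exact: polyfunM (polyfun_hess i j pf) (polyfun_hess i j pf).
Qed.

Lemma hessB f g x : polyfun f -> polyfun g ->
  hess (fun y => f y - g y) x = hess f x - hess g x.
Proof.
move=> pf pg; apply/matrixP => i j; rewrite !mxE.
have -> : (fun y => 'D_(evec R i) (fun z => f z - g z) y) =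
          (fun y => 'D_(evec R i) f y) - (fun y => 'D_(evec R i) g y).
  apply/funext => y; have -> : (fun z => f z - g z) = f - g by [].
  by rewrite (deriveB (polyfun_derivable pf) (polyfun_derivable pg)).
by rewrite (deriveB (polyfun_derivable (polyfun_derivative _ pf))
                    (polyfun_derivable (polyfun_derivative _ pg))).
Qed.

End PolynomialFunctions.
Arguments polyfun_cst {R n} c.
Arguments polyfun_coord {R n} k.

Section IteratedIntegral.
Variable R : realType.
Local Open Scope ereal_scope.

(* Functions on 'rV_n are called measurable when they are measurable along every
   coordinatewise measurable parametrization; this is all the iterated integral
   needs, and it avoids putting a sigma-algebra on 'rV_n. *)
Definition coord_measurable d (X : measurableType d) n (w : X -> 'rV[R]_n) :=
  forall i, measurable_fun setT (fun z => w z 0%R i).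

Definition row_measurable n (f : 'rV[R]_n -> \bar R) :=
  forall d (X : measurableType d) (w : X -> 'rV[R]_n),
    coord_measurable w -> measurable_fun setT (f \o w).

Definition jointly_measurable d (X : measurableType d) n
    (F : X -> 'rV[R]_n -> \bar R) :=
  forall d' (X' : measurableType d') (u : X' -> X) (w : X' -> 'rV[R]_n),
    measurable_fun setT u -> coord_measurable w ->
    measurable_fun setT (fun z => F (u z) (w z)).

Lemma coord_measurable_row_mx d (X : measurableType d) n (c : X -> R)
    (w : X -> 'rV[R]_n) :
  measurable_fun setT c -> coord_measurable w ->
  coord_measurable (fun z => row_mx ((c z)%:M : 'rV[R]_1) (w z)).
Proof.
move=> mc mw i; rewrite -(splitK i); case: (fintype.split i) => j /=.
  rewrite (_ : (fun _ => _) = c) //; apply/funext => z.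
  by rewrite row_mxEl (ord1 j) mxE eqxx mulr1n.
by rewrite (_ : (fun _ => _) = fun z => w z 0%R j) //; apply/funext => z; rewrite row_mxEr.
Qed.

Lemma jointly_measurable_shift d (X : measurableType d) n
    (F : X -> 'rV[R]_n.+1 -> \bar R) :
  jointly_measurable F ->
  jointly_measurable (fun (xt : X * measurableTypeR R) y =>
    F xt.1 (row_mx (xt.2%:M : 'rV[R]_1) y)).
Proof.
move=> mF d' X' u w mu mw.
apply: (mF _ _ (fst \o u)); first exact: measurableT_comp.
exact: coord_measurable_row_mx (measurableT_comp measurable_snd mu) mw.
Qed.

Lemma row_measurable_slice n (f : 'rV[R]_n.+1 -> \bar R) (t : R) :
  row_measurable f -> row_measurable (fun y => f (row_mx (t%:M : 'rV[R]_1) y)).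
Proof. by move=> mf d X w mw; exact: mf (coord_measurable_row_mx (measurable_cst t) mw). Qed.

Lemma jointly_measurable_slices n (f : 'rV[R]_n.+1 -> \bar R) :
  row_measurable f ->
  jointly_measurable (fun (t : measurableTypeR R) y => f (row_mx (t%:M : 'rV[R]_1) y)).
Proof. by move=> mf d X u w mu mw; exact: mf (coord_measurable_row_mx mu mw). Qed.

Lemma iterint_ge0 n (f : 'rV[R]_n -> \bar R) : (forall y, 0 <= f y) -> 0 <= iterint f.
Proof.
elim: n f => [|n IH] f f0 /=; first exact: f0.
by apply: integral_ge0 => t _; exact: IH.
Qed.

Lemma measurable_iterint n d (X : measurableType d) (F : X -> 'rV[R]_n -> \bar R) :
  jointly_measurable F -> (forall x y, 0 <= F x y) ->
  measurable_fun setT (fun x => iterint (F x)).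
Proof.
elim: n d X F => [|n IH] d X F mF F0 /=.
  by apply: (mF _ _ id (fun _ => 0%R)) => // i; exact: measurable_cst.
have := IH _ _ _ (jointly_measurable_shift mF) (fun _ _ => F0 _ _).
move=> /(measurable_fun_fubini_tonelli_F (m2 := lebesgue_measure)); apply.
by move=> xt; exact: iterint_ge0.
Qed.

Lemma measurable_iterint_slices n (f : 'rV[R]_n.+1 -> \bar R) :
  row_measurable f -> (forall y, 0 <= f y) ->
  measurable_fun setT (fun t : R => iterint (fun y => f (row_mx (t%:M : 'rV[R]_1) y))).
Proof. by move=> mf f0; exact: measurable_iterint (jointly_measurable_slices mf) _. Qed.

Lemma iterintD n (f g : 'rV[R]_n -> \bar R) :
  row_measurable f -> row_measurable g -> (forall y, 0 <= f y) -> (forall y, 0 <= g y) ->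
  iterint (fun y => f y + g y) = iterint f + iterint g.
Proof.
elim: n f g => [//|n IH] f g mf mg f0 g0 /=.
rewrite -ge0_integralD //.
- by apply: eq_integral => t _; apply: IH => //; exact: row_measurable_slice.
- by move=> t _; exact: iterint_ge0.
- exact: measurable_iterint_slices.
- by move=> t _; exact: iterint_ge0.
- exact: measurable_iterint_slices.
Qed.

Lemma le_iterint n (f g : 'rV[R]_n -> \bar R) :
  row_measurable f -> row_measurable g -> (forall y, 0 <= f y) -> (forall y, f y <= g y) ->
  iterint f <= iterint g.
Proof.
elim: n f g => [|n IH] f g mf mg f0 fg /=; first exact: fg.
have g0 y : 0 <= g y by exact: le_trans (f0 y) (fg y).
apply: ge0_le_integral => //.
- by move=> t _; exact: iterint_ge0.
- exact: measurable_iterint_slices.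
- exact: measurable_iterint_slices.
- by move=> t _; apply: IH => //; exact: row_measurable_slice.
Qed.

End IteratedIntegral.

Section Barycentric.
Variables (R : realType) (d : nat).

Lemma ext_coord_lt (j : 'I_d.+1) (f : 'I_d -> R) (h : (j < d)%N) :
  (if (j < d)%N as b return (j < d)%N = b -> R
   then fun h => f (Ordinal h) else fun _ => 1) erefl = f (Ordinal h).
Proof.
suff : forall (b : bool) (e : (j < d)%N = b),
    (if b as b' return (j < d)%N = b' -> R then fun h => f (Ordinal h)
     else fun _ => 1) e = f (Ordinal h) by apply.
case=> e; last by rewrite h in e.
by congr f; exact: val_inj.
Qed.

Lemma ext_coord_ge (j : 'I_d.+1) (f : 'I_d -> R) : ~~ (j < d)%N ->
  (if (j < d)%N as b return (j < d)%N = b -> R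
   then fun h => f (Ordinal h) else fun _ => 1) erefl = 1.
Proof.
move=> h; suff : forall (b : bool) (e : (j < d)%N = b),
    (if b as b' return (j < d)%N = b' -> R then fun h => f (Ordinal h)
     else fun _ => 1) e = 1 by apply.
by case=> // e; rewrite e in h.
Qed.

Lemma ext1_lt (x : 'rV[R]_d) (j : 'I_d.+1) (h : (j < d)%N) :
  ext1 x 0 j = x 0 (Ordinal h).
Proof. by rewrite mxE ext_coord_lt. Qed.

Lemma ext1_ge (x : 'rV[R]_d) (j : 'I_d.+1) : ~~ (j < d)%N -> ext1 x 0 j = 1.
Proof. by move=> h; rewrite mxE ext_coord_ge. Qed.

Lemma bary_mx_lt (a : 'I_d.+1 -> 'rV[R]_d) i (j : 'I_d.+1) (h : (j < d)%N) :
  bary_mx a i j = a i 0 (Ordinal h).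
Proof. by rewrite mxE ext_coord_lt. Qed.

Lemma bary_mx_ge (a : 'I_d.+1 -> 'rV[R]_d) i (j : 'I_d.+1) : ~~ (j < d)%N ->
  bary_mx a i j = 1.
Proof. by move=> h; rewrite mxE ext_coord_ge. Qed.

Lemma mul_bary_mxP (a : 'I_d.+1 -> 'rV[R]_d) (mu : 'I_d.+1 -> R) (x : 'rV[R]_d) :
  (\row_i mu i) *m bary_mx a = ext1 x <->
  \sum_i mu i = 1 /\ x = \sum_i mu i *: a i.
Proof.
split=> [E|[s1 ->]]; last first.
  apply/rowP => j; rewrite [LHS]mxE.
  case: (ltnP j d) => h.
    rewrite (ext1_lt _ h) summxE; apply: eq_bigr => i _.
    by rewrite (bary_mx_lt _ _ h) !mxE.
  rewrite ext1_ge -?leqNgt // -s1; apply: eq_bigr => i _.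
  by rewrite bary_mx_ge -?leqNgt // mxE mulr1.
split.
  have := congr1 (fun A : 'rV[R]_d.+1 => A 0 ord_max) E.
  rewrite /= ext1_ge /= ?ltnn // mxE => <-.
  by apply: eq_bigr => i _; rewrite bary_mx_ge /= ?ltnn // mxE mulr1.
apply/rowP => k.
have hk : ((widen_ord (leqnSn d) k : 'I_d.+1) < d)%N by rewrite /= ltn_ord.
have kE : Ordinal hk = k by exact: val_inj.
have := congr1 (fun A : 'rV[R]_d.+1 => A 0 (widen_ord (leqnSn d) k)) E.
rewrite /= (ext1_lt _ hk) mxE kE => <-; rewrite summxE; apply: eq_bigr => i _.
by rewrite (bary_mx_lt _ _ hk) !mxE kE.
Qed.

Lemma simplexP (a : 'I_d.+1 -> 'rV[R]_d) (y : 'rV[R]_d) : Defs.nondegenerate a ->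
  simplex a y <-> forall i, 0 <= lam a i y.
Proof.
move=> nd; split.
  case=> mu [mu0 [s1 yE]] i.
  by rewrite /lam -(proj2 (mul_bary_mxP _ _ _) (conj s1 yE)) (mulmxK nd) mxE.
move=> lam0; exists (fun i => lam a i y); split=> //.
apply/mul_bary_mxP.
have -> : \row_i lam a i y = ext1 y *m invmx (bary_mx a) by apply/rowP => i; rewrite mxE.
by rewrite (mulmxKV nd).
Qed.

End Barycentric.

Section ElementPolynomials.
Variables (R : realType) (d : nat).
Implicit Types (a : 'I_d.+1 -> 'rV[R]_d) (p g : 'rV[R]_d -> R).

Lemma polyfun_ext1 (j : 'I_d.+1) : polyfun (fun x : 'rV[R]_d => ext1 x 0 j).
Proof.
case: (ltnP j d) => h.
  by apply: eq_polyfun (polyfun_coord (Ordinal h)) _ => x; rewrite (ext1_lt _ h).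
by apply: eq_polyfun (polyfun_cst 1) _ => x; rewrite ext1_ge -?leqNgt.
Qed.

Lemma polyfun_lam a i : polyfun (lam a i).
Proof.
apply: eq_polyfun (polyfun_sum (index_enum _) (P := xpredT)
  (fun j _ => polyfunM (polyfun_ext1 j) (polyfun_cst (invmx (bary_mx a) j i)))) _.
by move=> x; rewrite /lam mxE.
Qed.

Lemma polyfun_ZK a p : ZK a p -> polyfun p.
Proof.
case=> q [[c0 [b [A qE]]] [c pE]].
have pq : polyfun q.
  apply: eq_polyfun (polyfunD (polyfunD (polyfun_cst c0)
      (polyfun_sum (index_enum _) (P := xpredT)
        (fun k _ => polyfunM (polyfun_cst (b 0 k)) (polyfun_coord k))))
      (polyfun_sum (index_enum _) (P := xpredT) (fun j _ => polyfunM
        (polyfun_sum (index_enum _) (P := xpredT)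
          (fun i _ => polyfunM (polyfun_coord i) (polyfun_cst (A i j))))
        (polyfun_coord j)))) _.
  move=> x; rewrite qE /dotv; congr (_ + _ + _).
  by rewrite !mxE; apply: eq_bigr => j _; rewrite !mxE.
have plam2 i : polyfun (fun x => lam a i x ^+ 2).
  by apply: eq_polyfun (polyfunM (polyfun_lam a i) (polyfun_lam a i)) _ => x.
have pbubble i j :
    polyfun (fun x => lam a i x ^+ 2 * lam a j x - lam a i x * lam a j x ^+ 2).
  exact: polyfunB (polyfunM (plam2 i) (polyfun_lam a j))
                  (polyfunM (polyfun_lam a i) (plam2 j)).
apply: eq_polyfun (fun x => esym (pE x)); apply: polyfunD pq _.
apply: polyfun_sum => i _; apply: polyfun_sum => j _.
exact: polyfunM (polyfun_cst (c i j)) (pbubble i j).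
Qed.

Lemma polyfun_PiK a p : polyfun (PiK a p).
Proof.
apply: polyfunD.
  apply: polyfun_sum => i _; exact: polyfunM (polyfun_cst _) (polyfun_lam a i).
apply: polyfun_sum => i _; apply: polyfun_sum => j _.
apply: polyfunM (polyfun_cst _) (polyfunM (polyfunM (polyfun_cst _) _) _);
  exact: polyfun_lam.
Qed.

Lemma hess_PiK_PicK a p x : ZK a p ->
  hess p x = hess (PiK a p) x + hess (PicK a p) x.
Proof.
by move=> /polyfun_ZK pp; rewrite /PicK (hessB _ pp (polyfun_PiK a p)) addrC subrK.
Qed.

End ElementPolynomials.

Lemma measurable_all d (X : measurableType d) (I : Type) (s : seq I)
    (B : I -> X -> bool) :
  (forall i, measurable_fun setT (B i)) ->
  measurable_fun setT (fun z => all (fun i => B i z) s).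
Proof.
move=> mB; elim: s => [|i s IH] /=; first exact: measurable_cst.
exact: measurable_and.
Qed.

Lemma measurable_polyfun (R : realType) n (f : 'rV[R]_n -> R) d
    (X : measurableType d) (w : X -> 'rV[R]_n) :
  polyfun f -> coord_measurable w -> measurable_fun setT (f \o w).
Proof.
move=> pf mw; elim: pf => [c|k|f1 g _ mf _ mg|f1 g _ mf _ mg].
- exact: measurable_cst.
- exact: mw.
- exact: measurable_funD.
- exact: measurable_funM.
Qed.

Section SimplexIntegrals.
Variables (R : realType) (d : nat).
Implicit Types (a : 'I_d.+1 -> 'rV[R]_d) (g : 'rV[R]_d -> R).
Local Open Scope ereal_scope.

Lemma row_measurable_restrict (I : Type) (s : seq I) (l : I -> 'rV[R]_d -> R) g :
  (forall i, polyfun (l i)) -> polyfun g ->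
  row_measurable (fun y => if all (fun i => 0 <= l i y)%R s then (g y)%:E else 0).
Proof.
move=> pl pg d' X w mw; apply: measurable_fun_ifT.
- apply: measurable_all => i; apply: measurable_fun_ler; first exact: measurable_cst.
  exact: measurable_polyfun (pl i) mw.
- exact/measurable_EFinP/(measurable_polyfun pg mw).
- exact: measurable_cst.
Qed.

Lemma row_measurable_simplex a g : Defs.nondegenerate a -> polyfun g ->
  row_measurable (fun y => if `[< simplex a y >] then (g y)%:E else 0).
Proof.
move=> nd pg.
have -> : (fun y => if `[< simplex a y >] then (g y)%:E else 0) =
    (fun y => if all (fun i => 0 <= lam a i y)%R (index_enum 'I_d.+1)
              then (g y)%:E else 0).
  apply/funext => y; congr (if _ then _ else _).
  apply/asboolP/allP => [/(simplexP _ nd) lam0 i _ | lam0]; first exact: lam0.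
  by apply/(simplexP _ nd) => i; exact: lam0 (mem_index_enum i).
exact: row_measurable_restrict (polyfun_lam a) pg.
Qed.

Lemma intover_ge0 (S : set 'rV[R]_d) g : (forall y, 0 <= g y)%R -> 0 <= intover S g.
Proof. by move=> g0; apply: iterint_ge0 => y; case: asboolP; rewrite ?lee_fin. Qed.

Lemma intover_simplexD a g1 g2 : Defs.nondegenerate a -> polyfun g1 -> polyfun g2 ->
  (forall y, 0 <= g1 y)%R -> (forall y, 0 <= g2 y)%R ->
  intover (simplex a) (fun y => g1 y + g2 y)%R =
  intover (simplex a) g1 + intover (simplex a) g2.
Proof.
move=> nd p1 p2 g10 g20; rewrite /intover -iterintD.
- by congr iterint; apply/funext => y; case: asboolP; rewrite ?adde0.
- exact: row_measurable_simplex.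
- exact: row_measurable_simplex.
- by move=> y; case: asboolP; rewrite ?lee_fin.
- by move=> y; case: asboolP; rewrite ?lee_fin.
Qed.

Lemma le_intover_simplex a g1 g2 : Defs.nondegenerate a -> polyfun g1 -> polyfun g2 ->
  (forall y, 0 <= g1 y)%R -> (forall y, g1 y <= g2 y)%R ->
  intover (simplex a) g1 <= intover (simplex a) g2.
Proof.
move=> nd p1 p2 g10 g12; apply: le_iterint.
- exact: row_measurable_simplex.
- exact: row_measurable_simplex.
- by move=> y; case: asboolP; rewrite ?lee_fin.
- by move=> y; case: asboolP; rewrite ?lee_fin.
Qed.

Lemma le_intover_simplex_split a g h1 h2 : Defs.nondegenerate a ->
  polyfun g -> polyfun h1 -> polyfun h2 ->
  (forall y, 0 <= g y)%R -> (forall y, 0 <= h1 y)%R -> (forall y, 0 <= h2 y)%R ->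
  (forall y, g y <= (h1 y + h1 y) + (h2 y + h2 y))%R ->
  intover (simplex a) g <=
  (intover (simplex a) h1 + intover (simplex a) h1)
  + (intover (simplex a) h2 + intover (simplex a) h2).
Proof.
move=> nd pg p1 p2 g0 h10 h20 gh.
have h110 y : (0 <= h1 y + h1 y)%R by rewrite addr_ge0.
have h220 y : (0 <= h2 y + h2 y)%R by rewrite addr_ge0.
rewrite -(intover_simplexD nd p1 p1 h10 h10) -(intover_simplexD nd p2 p2 h20 h20).
rewrite -(intover_simplexD nd (polyfunD p1 p1) (polyfunD p2 p2) h110 h220).
exact: le_intover_simplex (polyfunD (polyfunD p1 p1) (polyfunD p2 p2)) g0 gh.
Qed.

End SimplexIntegrals.

Lemma lee_sum_split (R : realType) (I : Type) (r : seq I) (f g h : I -> \bar R) :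
  (forall i, f i <= (g i + g i) + (h i + h i))%E ->
  (\sum_(i <- r) f i <=
  (\sum_(i <- r) g i + \sum_(i <- r) g i) + (\sum_(i <- r) h i + \sum_(i <- r) h i))%E.
Proof. by move=> fgh; rewrite -!big_split; exact: lee_sum. Qed.

Lemma half_weighted_sum_le (R : realType) (e : R) (H H1 H2 G : \bar R) :
  (0 <= e)%R -> (0 <= H)%E -> (0 <= H1)%E -> (0 <= H2)%E -> (0 <= G)%E ->
  (H <= (H1 + H1) + (H2 + H2))%E ->
  ((2^-1)%:E * (e%:E * H + G) <= e%:E * (H1 + H2) + G)%E.
Proof.
move=> e0 h h1 h2 g HH; rewrite ge0_muleDr ?mule_ge0 ?lee_fin //.
apply: leeD; last by apply: gee_pMl; rewrite ?lee_fin ?invf_le1 ?ler1n.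
rewrite muleCA; apply: lee_wpmul2l; first by rewrite lee_fin.
rewrite lee_pdivrMl // (le_trans HH) // addeACA.
have -> : (2 : R)%:E = 1%:E + 1%:E by rewrite -EFinD.
by rewrite ge0_muleDl // mul1e.
Qed.

Section BrokenNorms.
Variables (R : realType) (d : nat).

Lemma sqnv_ge0 (u : 'rV[R]_d) : 0 <= sqnv u.
Proof. by apply: sumr_ge0 => i _; exact: sqr_ge0. Qed.

Lemma sqnm_ge0 (A : 'M[R]_d) : 0 <= sqnm A.
Proof. by apply: sumr_ge0 => i _; apply: sumr_ge0 => j _; exact: sqr_ge0. Qed.

(* The doubled terms are written as sums so that they integrate without any
   scalar multiplication. *)
Lemma sqnmD_le (A B : 'M[R]_d) :
  sqnm (A + B) <= (sqnm A + sqnm A) + (sqnm B + sqnm B).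
Proof.
rewrite /sqnm -!big_split /=; apply: ler_sum => i _.
rewrite -!big_split /=; apply: ler_sum => j _; rewrite mxE.
rewrite -subr_ge0 (_ : _ - _ = (A i j - B i j) ^+ 2) ?sqr_ge0 //.
by ring.
Qed.

Local Open Scope ereal_scope.

Lemma intover_sqnm_hess_le (a : 'I_d.+1 -> 'rV[R]_d) (p : 'rV[R]_d -> R) :
  Defs.nondegenerate a -> ZK a p ->
  intover (simplex a) (fun x => sqnm (hess p x)) <=
  (intover (simplex a) (fun x => sqnm (hess (PiK a p) x))
   + intover (simplex a) (fun x => sqnm (hess (PiK a p) x)))
  + (intover (simplex a) (fun x => sqnm (hess (PicK a p) x))
     + intover (simplex a) (fun x => sqnm (hess (PicK a p) x))).
Proof.
move=> nd zp; have pp := polyfun_ZK zp.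
have pc : polyfun (PicK a p) := polyfunB pp (polyfun_PiK a p).
apply: (le_intover_simplex_split nd (polyfun_sqnm_hess pp)
  (polyfun_sqnm_hess (polyfun_PiK a p)) (polyfun_sqnm_hess pc)) => y.
- exact: sqnm_ge0.
- exact: sqnm_ge0.
- exact: sqnm_ge0.
- by rewrite (hess_PiK_PicK _ zp); exact: sqnmD_le.
Qed.

Lemma sq_hess_h_ge0 n (a : 'I_n -> 'I_d.+1 -> 'rV[R]_d) (p : 'I_n -> 'rV[R]_d -> R) :
  0 <= sq_hess_h a p.
Proof. by apply: sume_ge0 => k _; apply: intover_ge0 => y; exact: sqnm_ge0. Qed.

Lemma sq_grad_h_ge0 n (a : 'I_n -> 'I_d.+1 -> 'rV[R]_d) (p : 'I_n -> 'rV[R]_d -> R) :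
  0 <= sq_grad_h a p.
Proof. by apply: sume_ge0 => k _; apply: intover_ge0 => y; exact: sqnv_ge0. Qed.

Lemma sq_hess_h_le n (a : 'I_n -> 'I_d.+1 -> 'rV[R]_d) (p : 'I_n -> 'rV[R]_d -> R) :
  (forall k, Defs.nondegenerate (a k)) -> (forall k, ZK (a k) (p k)) ->
  sq_hess_h a p <=
  (sq_hess_h a (fun k => PiK (a k) (p k)) + sq_hess_h a (fun k => PiK (a k) (p k)))
  + (sq_hess_h a (fun k => PicK (a k) (p k)) + sq_hess_h a (fun k => PicK (a k) (p k))).
Proof.
move=> nd zp.
exact: lee_sum_split (fun k => intover_sqnm_hess_le (nd k) (zp k)).
Qed.

End BrokenNorms.

Unset Implicit Arguments. Set Strict Implicit.

Theorem mainTheorem4 (R : realType) (d : nat) (hd : (2 <= d)%N)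
  (m : nat) (vert : 'I_m -> 'rV[R]_d)
  (Obar_int : exists x, interior (hull vert) x)
  (n : nat) (a : 'I_n -> 'I_d.+1 -> 'rV[R]_d)
  (hT : triangulation (hull vert) a)
  (eps : R) (heps : 0 < eps)
  (v : 'rV[R]_d -> R) (p : 'I_n -> 'rV[R]_d -> R)
  (hv : in_Vh (hull vert) a v p) :
  ((2^-1)%:E * tnorm2 eps a p <= bh_vv eps a p)%E.
Proof.
have [nd _] := hT.
have [_ [zp _]] := hv.
apply: half_weighted_sum_le.
- by rewrite exprn_ge0 ?ltW.
- exact: sq_hess_h_ge0.
- exact: sq_hess_h_ge0.
- exact: sq_hess_h_ge0.
- exact: sq_grad_h_ge0.
- exact: sq_hess_h_le.
Qed.
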